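(* Let $\Gamma$ be a compact abelian group such that for every $a\in\mathbb{N}^{\times}$ the subgroup $\omega_a(\Gamma)$ has finite index in $\Gamma$ and $\ker\omega_a$ is finite, where $\omega_a:\Gamma\to\Gamma$ is $\omega_a(g)=g^a$. Then each $\omega_a$ is a proper local homeomorphism.
   Context: $\mathbb{N}^{\times}$ denotes the set of positive integers; $\Gamma$ is written multiplicatively and is Hausdorff. *)

From HB Require Import structures.
From mathcomp Require Import all_boot all_order all_algebra.
From mathcomp Require Import all_classical all_reals all_analysis.
Set Implicit Arguments. Unset Strict Implicit. Unset Printing Implicit Defensive.
Import GRing.Theory.
Local Open Scope classical_set_scope.
Local Open Scope ring_scope.

(* The abelian group Gamma is written additively (topologicalZmodType);
   omega_a(g) = g^a becomes g *+ a. *)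
Definition omega (G : zmodType) (a : nat) : G -> G := fun g => g *+ a.

Definition cosets_of (G : zmodType) (H : set G) : set (set G) :=
  [set [set x + h | h in H] | x in [set: G]].

Definition finite_index (G : zmodType) (H : set G) : Prop :=
  finite_set (cosets_of H).

Definition ker_of (G : zmodType) (f : G -> G) : set G := [set g | f g = 0].

Definition local_homeomorphism (X Y : topologicalType) (f : X -> Y) : Prop :=
  forall x : X, exists U : set X,
    [/\ open U /\ U x, open (f @` U),
        {within U, continuous f},
        set_inj U f &
        exists g : Y -> X,
          [/\ {in U, forall u, g (f u) = u}, g @` (f @` U) `<=` U &
              {within f @` U, continuous g}]].

Definition proper_map (X Y : topologicalType) (f : X -> Y) : Prop :=
  continuous f /\ forall K : set Y, compact K -> compact (f @^-1` K).

From HB Require Import structures.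
From mathcomp Require Import all_boot all_order all_algebra.
From mathcomp Require Import all_classical all_reals all_analysis.
Import GRing.Theory.
Local Open Scope classical_set_scope.
Local Open Scope ring_scope.

(* The range H of f := omega_a is compact, hence a closed subgroup of finite
   index, hence open.  For W open, the set S := W + ker f is open and
   f(W) = H \ f(G \ S), where f(G \ S) is compact: f is an open map.  A
   neighbourhood V of 0 with (V - V) meeting ker f only in 0 makes f injective
   on every translate x + V, and a continuous open map is a homeomorphism from
   any open set on which it is injective onto the (open) image.  Properness
   holds for any continuous map from a compact space to a Hausdorff space. *)

Section open_maps.
Context {X Y : topologicalType} (f : X -> Y).

Definition open_map := forall W : set X, open W -> open (f @` W).

Lemma open_map_inverse_continuous (U : set X) (g : Y -> X) :
  open_map -> open U -> {in U, cancel f g} -> {within f @` U, continuous g}.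
Proof.
move=> fopen oU fgK; rewrite continuous_open_subspace; last exact: fopen.
move=> _ /set_mem[u Uu <-] B; rewrite /continuous_at fgK ?inE// => nB.
have : nbhs (f u) (f @` (B° `&` U)).
  apply: open_nbhs_nbhs; split; first by apply/fopen/openI; first exact: open_interior.
  by exists u => //; split => //; exact: nbhs_singleton (nbhs_interior nB).
apply: filterS => _ [w [Bw Uw] <-] /=; rewrite fgK ?inE//; exact: interior_subset.
Qed.

Lemma local_homeomorphism_open_map : continuous f -> open_map ->
  (forall x, exists2 U : set X, open U /\ U x & set_inj U f) ->
  local_homeomorphism f.
Proof.
move=> fcont fopen locinj x; have [U [oU Ux] injU] := locinj x.
pose g := 'pinv_(fun=> x) U f.
have fgK : {in U, cancel f g} by exact: pinvKV.
exists U; split => //; first exact: fopen.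
  exact: continuous_subspaceT.
exists g; split.
- by move=> u /fgK.
- by move=> _ [_ [u Uu <-] <-]; rewrite fgK ?inE.
- exact: open_map_inverse_continuous.
Qed.

Lemma proper_map_compact : compact [set: X] -> hausdorff_space Y ->
  continuous f -> proper_map f.
Proof.
move=> cX hY fcont; split => // K cK.
apply: subclosed_compact cX _ => //.
by apply: (continuous_closedP f).1 => //; exact: compact_closed.
Qed.

End open_maps.

Section topological_zmodule.
Context {G : topologicalZmodType}.

Lemma natmul_continuous (a : nat) : continuous (fun g : G => g *+ a).
Proof.
elim: a => [|a IHa] x.
  by under [fun g => _]funext do rewrite mulr0n; exact: cvg_cst.
under [fun g => _]funext do rewrite mulrS.
apply: (@continuous_comp _ _ _ (fun g => (g, g *+ a)) (fun p => p.1 + p.2)).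
  by apply: cvg_pair; [exact: cvg_id | exact: IHa].
exact: add_continuous.
Qed.

Lemma subr_continuous (c : G) : continuous (fun y : G => y - c).
Proof.
move=> x; apply: (@continuous_comp _ _ _ (fun y => (y, c)) (fun p => p.1 - p.2)).
  by apply: cvg_pair; [exact: cvg_id | exact: cvg_cst].
exact: sub_continuous.
Qed.

Lemma open_translate (W : set G) (c : G) : open W -> open [set y | W (y - c)].
Proof. exact: (continuousP _).1 (subr_continuous c) W. Qed.

Lemma closed_translate (W : set G) (c : G) :
  closed W -> closed [set y | W (y - c)].
Proof. exact: (continuous_closedP _).1 (subr_continuous c) W. Qed.

Lemma nbhs0_subr (P : set G) : nbhs 0 P ->
  exists V : set G, [/\ open V, V 0 & forall v w, V v -> V w -> P (v - w)].
Proof.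
move=> nP; have := @sub_continuous G (0, 0) P; rewrite /= subr0 => /(_ nP).
case=> [[A B]] /= [nA nB] sAB.
have nAB : nbhs (0 : G) (A `&` B) by apply: filterI.
exists (A `&` B)°; split; first exact: open_interior.
  exact: nbhs_singleton (nbhs_interior nAB).
move=> v w /interior_subset[Av _] /interior_subset[_ Bw].
exact: (sAB (v, w)).
Qed.

Lemma finite_index_closed_subgroup_open (H : set G) :
  H 0 -> (forall x y, H x -> H y -> H (x - y)) ->
  closed H -> finite_index H -> open H.
Proof.
move=> H0 HB cH fiH.
pose D := cosets_of H `&` [set C | C `<=` ~` H].
have HCE : ~` H = \bigcup_(C in D) C.
  apply/seteqP; split => [y Hy|y [C [_ CH] /CH//]].
  exists [set y + h | h in H]; last by exists 0; rewrite ?addr0.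
  split; first by exists y.
  move=> _ [h Hh <-] Hyh; apply: Hy.
  by have := HB _ _ Hyh Hh; rewrite addrK.
rewrite -[H]setCK openC HCE; apply: closed_bigcup.
  by apply: sub_finite_set fiH => C [].
move=> _ [[x _ <-] _].
have -> : [set x + h | h in H] = [set z | H (z - x)].
  apply/seteqP; split => z; first by case=> h Hh <-; rewrite /= addrAC subrr add0r.
  by exists (z - x); rewrite // addrC subrK.
exact: closed_translate.
Qed.

End topological_zmodule.

Section continuous_morphism.
Context {G G' : topologicalZmodType} (f : G -> G').
Hypotheses (fB : {morph f : x y / x - y}) (fcont : continuous f).

Lemma open_map_compact_morphism : compact [set: G] -> hausdorff_space G' ->
  open (range f) -> open_map f.
Proof.
move=> cG hG' oH W oW.
pose S := \bigcup_(k in f @^-1` [set 0]) [set y | W (y - k)].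
have oS : open S by apply: bigcup_open => k _; exact: open_translate.
have cfS : closed (f @` ~` S).
  apply: compact_closed => //; apply: continuous_compact.
    exact: continuous_subspaceT.
  by apply: subclosed_compact cG _ => //; rewrite closedC.
have -> : f @` W = range f `&` ~` (f @` ~` S).
  apply/seteqP; split => [_ [w Ww <-]|_ [[z _ <-] zS]].
    split; first by exists w.
    move=> [z zS fzw]; apply: zS; exists (z - w).
      by rewrite /= fB fzw subrr.
    by rewrite /= opprB addrC subrK.
  have [k /= fk Wzk] : S z by apply: contrapT => zS'; apply: zS; exists z.
  by exists (z - k); rewrite // fB fk subr0.
by apply: openI; rewrite // openC.
Qed.

Lemma locally_injective_morphism : hausdorff_space G ->
  finite_set (f @^-1` [set 0]) ->
  forall x, exists2 U : set G, open U /\ U x & set_inj U f.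
Proof.
move=> hG fK x; set K' := f @^-1` [set 0] `\ 0.
have cK' : closed K'.
  apply: (@accessible_finite_set_closed G).1; first exact: hausdorff_accessible.
  by apply: sub_finite_set fK => y [].
have nK' : nbhs (0 : G) (~` K').
  by apply: open_nbhs_nbhs; split; [rewrite openC | move=> [_]; apply].
have [V [oV V0 VK']] := nbhs0_subr _ nK'.
exists [set y | V (y - x)]; first by split; [exact: open_translate | rewrite /= subrr].
move=> u1 u2; rewrite !inE /= => Vu1 Vu2 fu12.
have := VK' _ _ Vu1 Vu2; rewrite opprB addrA subrK => uK'.
apply/eqP; rewrite -subr_eq0; apply/eqP; apply: contrapT => u12; apply: uK'.
by split => //; rewrite /= fB fu12 subrr.
Qed.

End continuous_morphism.

Theorem lemma3p3 (G : topologicalZmodType) :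
  hausdorff_space G ->
  compact [set: G] ->
  (forall a : nat, (0 < a)%N ->
     finite_index (range (@omega G a)) /\ finite_set (ker_of (@omega G a))) ->
  forall a : nat, (0 < a)%N ->
    local_homeomorphism (@omega G a) /\ proper_map (@omega G a).
Proof.
move=> hG cG hyp a a0; have [fiH fK] := hyp a a0.
have omegaB : {morph @omega G a : x y / x - y} by move=> x y; exact: mulrnBl.
have omega_cont : continuous (@omega G a) := natmul_continuous a.
have cH : closed (range (@omega G a)).
  apply: compact_closed => //; apply: continuous_compact => //.
  exact: continuous_subspaceT.
have oH : open (range (@omega G a)).
  apply: finite_index_closed_subgroup_open => //.
  - by exists 0; rewrite // /omega mul0rn.
  - by move=> _ _ [u _ <-] [v _ <-]; exists (u - v); rewrite ?omegaB.
split; last exact: proper_map_compact.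
apply: local_homeomorphism_open_map.
- exact: omega_cont.
- exact: open_map_compact_morphism.
- exact: locally_injective_morphism.
Qed.
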